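(* Each of the following third-order recursions is periodic with period $12$: $$z_n = \frac{-1 - 2 z_{n-3} + 2 z_{n-2} - 2 z_{n-1}}{2 z_{n-3}},$$ $$z_n = \frac{(1+\sqrt3\, i) z_{n-3} + 2 z_{n-2} + (1-\sqrt3\, i) z_{n-1} + (-1-\sqrt3\, i)}{2 z_{n-3}},$$ $$z_n = \frac{(1-\sqrt3\, i) z_{n-3} + 2 z_{n-2} + (1+\sqrt3\, i) z_{n-1} + (-1+\sqrt3\, i)}{2 z_{n-3}}.$$ That is, for the sequence defined from indeterminates $z_1,z_2,z_3$ one has $z_{13}=z_1$, $z_{14}=z_2$, $z_{15}=z_3$ in $\mathbb{C}(z_1,z_2,z_3)$, hence $z_{n+12}=z_n$ for all $n\ge1$.
   Context: Let $z_1,z_2,z_3$ be independent indeterminates over $\mathbb{C}$ and define $z_n\in\mathbb{C}(z_1,z_2,z_3)$ for $n\ge4$ by the given recursion. A third-order recursion is periodic with period $k$ if all iterates are well-defined elements of $\mathbb{C}(z_1,z_2,z_3)$ (no denominator identically zero) and $z_{k+1}=z_1$, $z_{k+2}=z_2$, $z_{k+3}=z_3$; equivalently every complex sequence satisfying the recursion with no vanishing denominator satisfies $z_{n+k}=z_n$ for all $n$. *)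

From HB Require Import structures.
From mathcomp Require Import all_boot all_order all_algebra.
Set Implicit Arguments. Unset Strict Implicit. Unset Printing Implicit Defensive.
Import Order.TTheory GRing.Theory Num.Theory.
Local Open Scope ring_scope.

(* The field of rational functions C(z1,z2,z3), realized as the fraction
   field of the iterated polynomial ring C[z3][z2][z1]. *)
Definition ratfun3 (C : fieldType) := {fraction {poly {poly {poly C}}}}.

Definition indet1 (C : fieldType) : ratfun3 C :=
  FracField.tofrac ('X : {poly {poly {poly C}}}).
Definition indet2 (C : fieldType) : ratfun3 C :=
  FracField.tofrac (('X : {poly {poly C}})%:P : {poly {poly {poly C}}}).
Definition indet3 (C : fieldType) : ratfun3 C :=
  FracField.tofrac ((('X : {poly C})%:P)%:P : {poly {poly {poly C}}}).

(* The sequence of a third-order recursion  z_n = N(z_{n-3},z_{n-2},z_{n-1}) / D(z_{n-3},z_{n-2},z_{n-1}),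
   0-indexed: rec3 N D x1 x2 x3 0 = x1 (= z_1), ..., rec3 ... n = z_{n+1}. *)
Definition rec3_step (K : fieldType) (N D : K -> K -> K -> K) (t : K * K * K) : K * K * K :=
  let: (a, b, c) := t in (b, c, N a b c / D a b c).

Definition rec3 (K : fieldType) (N D : K -> K -> K -> K) (x1 x2 x3 : K) (n : nat) : K :=
  (iter n (rec3_step N D) (x1, x2, x3)).1.1.

(* Periodicity with period k of the recursion, started at x1 x2 x3:
   every denominator D(z_{n}, z_{n+1}, z_{n+2}) is nonzero (all iterates are
   well defined) and z_{k+1} = z_1, z_{k+2} = z_2, z_{k+3} = z_3. *)
Definition periodic3 (K : fieldType) (N D : K -> K -> K -> K) (x1 x2 x3 : K) (k : nat) : Prop :=
  [/\ (forall n, D (rec3 N D x1 x2 x3 n) (rec3 N D x1 x2 x3 n.+1) (rec3 N D x1 x2 x3 n.+2) != 0),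
      rec3 N D x1 x2 x3 k = x1,
      rec3 N D x1 x2 x3 k.+1 = x2 &
      rec3 N D x1 x2 x3 k.+2 = x3].

Definition rec3_periodic (C : fieldType) (N D : ratfun3 C -> ratfun3 C -> ratfun3 C -> ratfun3 C) (k : nat) : Prop :=
  periodic3 N D (indet1 C) (indet2 C) (indet3 C) k.

From mathcomp Require Import all_boot all_order all_algebra.
From mathcomp Require Import ring.
Import Order.TTheory GRing.Theory Num.Theory.
Local Open Scope ring_scope.

(* From the indeterminates x1, x2, x3, the first fifteen terms of each sequence
   are given in closed form as quotients of products of explicit polynomials:
   [factor1 k] for the first recursion, and [factor2 k] in s = sqrt 3 * i and
   x1, x2, x3 for the other two, which differ by s |-> -s.  Each recursion step
   is then a rational identity, checked by [field] modulo s^2 = -3, and terms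
   13, 14, 15 are x1, x2, x3 again; as the state (z_n, z_n+1, z_n+2) returns to
   its start, the sequence is periodic.  No denominator vanishes, because every
   factor has a nonzero value at the origin: +-1 or 2 for the first recursion,
   and +-2 or +-(1 + s), +-(1 - s) up to a factor 4 for the others, which are
   nonzero since (1 + s)(1 - s) = 4. *)

Section Cycle.

Context {K : fieldType} {N D : K -> K -> K -> K} {k : nat} (w : nat -> K).
Hypothesis k_gt0 : (0 < k)%N.
Hypothesis w_rec : forall m, (m < k)%N ->
  w m.+3 * D (w m) (w m.+1) (w m.+2) = N (w m) (w m.+1) (w m.+2).
Hypothesis D_neq0 : forall m, (m < k)%N -> D (w m) (w m.+1) (w m.+2) != 0.
Hypothesis w_wrap : [/\ w k = w 0, w k.+1 = w 1 & w k.+2 = w 2].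

Let state n := iter n (rec3_step N D) (w 0, w 1, w 2).

Lemma rec3_state n :
  (rec3 N D (w 0) (w 1) (w 2) n, rec3 N D (w 0) (w 1) (w 2) n.+1,
   rec3 N D (w 0) (w 1) (w 2) n.+2) = state n.
Proof. by rewrite /rec3 /state !iterS; case: (iter n _ _) => [[a b] c]. Qed.

Lemma state_cycle m : (m <= k)%N -> state m = (w m, w m.+1, w m.+2).
Proof.
elim: m => [//|m IHm] lemk.
rewrite /state iterS -/(state m) IHm 1?ltnW //=.
by rewrite -w_rec // mulfK // D_neq0.
Qed.

Lemma state_mod n : state n = state (n %% k)%N.
Proof.
have state_k : state k = state 0.
  by case: w_wrap => w0 w1 w2; rewrite state_cycle // w0 w1 w2.
rewrite {1}(divn_eq n k); elim: (n %/ k)%N => [|q IHq]; first by rewrite mul0n.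
rewrite /state mulSn -addnA addnC iterD -/(state k) state_k.
exact: IHq.
Qed.

Lemma periodic3_cycle : periodic3 N D (w 0) (w 1) (w 2) k.
Proof.
have rec3_mod n :
    (rec3 N D (w 0) (w 1) (w 2) n, rec3 N D (w 0) (w 1) (w 2) n.+1,
     rec3 N D (w 0) (w 1) (w 2) n.+2) =
    (w (n %% k)%N, w (n %% k)%N.+1, w (n %% k)%N.+2).
  by rewrite rec3_state state_mod state_cycle // ltnW // ltn_pmod.
case: w_wrap => w0 w1 w2; split=> [n|||].
- by case: (rec3_mod n) => -> -> ->; rewrite D_neq0 // ltn_pmod.
- by case: (rec3_mod k) => -> _ _; rewrite modnn.
- by case: (rec3_mod k) => _ -> _; rewrite modnn.
- by case: (rec3_mod k) => _ _ ->; rewrite modnn.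
Qed.

End Cycle.

(* The factors were found by computer algebra.  The default value 1 lets the
   nonvanishing hypotheses below range over all k.  [orbit1 x1 x2 x3 n] is
   z_(n+1) only for n <= 14. *)
Definition factor1 {R : comNzRingType} (k : nat) (x1 x2 x3 : R) : R :=
  match k with
  | 3 =>
      - 2 * x1 + 2 * x2 - 2 * x3 - 1
  | 4 =>
      - 2 * x1 * x2 + 2 * x1 * x3 + x1 - 2 * x2 + 2 * x3 + 1
  | 5 =>
      - 2 * x1 * x2 * x3 - x1 * x2 - 2 * x1 * x3 - x1 + 2 * x2 ^+ 2
      - 2 * x2 * x3 + x2 - 2 * x3 - 1
  | 6 =>
      x1 * x2 * x3 + x1 * x2 + 2 * x1 * x3 ^+ 2 + 3 * x1 * x3 + x1
      - 2 * x2 ^+ 2 * x3 - 2 * x2 ^+ 2 + 2 * x2 * x3 ^+ 2 + x2 * x3 - x2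
      + 2 * x3 ^+ 2 + 3 * x3 + 1
  | 7 =>
      2 * x1 * x2 ^+ 2 * x3 - 2 * x1 * x2 ^+ 2 - 6 * x1 * x2 * x3 ^+ 2
      - 5 * x1 * x2 * x3 - x1 * x2 + 4 * x1 * x3 ^+ 3 + 8 * x1 * x3 ^+ 2
      + 5 * x1 * x3 + x1 + 4 * x2 ^+ 3 - 4 * x2 ^+ 2 * x3 - 4 * x2 * x3 ^+ 2
      - 8 * x2 * x3 - 3 * x2 + 4 * x3 ^+ 3 + 8 * x3 ^+ 2 + 5 * x3 + 1
  | 8 =>
      - 8 * x1 ^+ 3 * x2 * x3 ^+ 2 - 4 * x1 ^+ 3 * x2 * x3
      + 8 * x1 ^+ 3 * x3 ^+ 3 + 8 * x1 ^+ 3 * x3 ^+ 2 + 2 * x1 ^+ 3 * x3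
      + 4 * x1 ^+ 2 * x2 ^+ 2 * x3 ^+ 2 + 14 * x1 ^+ 2 * x2 ^+ 2 * x3
      + 2 * x1 ^+ 2 * x2 ^+ 2 - 4 * x1 ^+ 2 * x2 * x3 ^+ 3
      - 24 * x1 ^+ 2 * x2 * x3 ^+ 2 - 9 * x1 ^+ 2 * x2 * x3 + x1 ^+ 2 * x2
      + 8 * x1 ^+ 2 * x3 ^+ 3 + 4 * x1 ^+ 2 * x3 ^+ 2 - 2 * x1 ^+ 2 * x3
      - x1 ^+ 2 - 12 * x1 * x2 ^+ 3 * x3 - 8 * x1 * x2 ^+ 3
      + 24 * x1 * x2 ^+ 2 * x3 ^+ 2 + 20 * x1 * x2 ^+ 2 * x3
      - 12 * x1 * x2 * x3 ^+ 3 - 4 * x1 * x2 * x3 ^+ 2 + 13 * x1 * x2 * x3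
      + 6 * x1 * x2 - 8 * x1 * x3 ^+ 3 - 16 * x1 * x3 ^+ 2 - 10 * x1 * x3
      - 2 * x1 + 8 * x2 ^+ 4 - 24 * x2 ^+ 3 * x3 - 4 * x2 ^+ 3
      + 24 * x2 ^+ 2 * x3 ^+ 2 - 6 * x2 ^+ 2 - 8 * x2 * x3 ^+ 3
      + 12 * x2 * x3 ^+ 2 + 18 * x2 * x3 + 5 * x2 - 8 * x3 ^+ 3 - 12 * x3 ^+ 2
      - 6 * x3 - 1
  | 9 =>
      - 8 * x1 ^+ 3 * x2 ^+ 3 * x3 - 4 * x1 ^+ 3 * x2 ^+ 3
      - 16 * x1 ^+ 3 * x2 ^+ 2 * x3 ^+ 2 - 20 * x1 ^+ 3 * x2 ^+ 2 * x3
      - 6 * x1 ^+ 3 * x2 ^+ 2 + 8 * x1 ^+ 3 * x2 * x3 ^+ 3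
      + 8 * x1 ^+ 3 * x2 * x3 ^+ 2 + 2 * x1 ^+ 3 * x2 * x3
      + 16 * x1 ^+ 3 * x3 ^+ 4 + 40 * x1 ^+ 3 * x3 ^+ 3
      + 36 * x1 ^+ 3 * x3 ^+ 2 + 14 * x1 ^+ 3 * x3 + 2 * x1 ^+ 3
      + 24 * x1 ^+ 2 * x2 ^+ 4 * x3 + 20 * x1 ^+ 2 * x2 ^+ 4
      - 12 * x1 ^+ 2 * x2 ^+ 3 * x3 ^+ 2 + 22 * x1 ^+ 2 * x2 ^+ 3 * x3
      + 18 * x1 ^+ 2 * x2 ^+ 3 - 36 * x1 ^+ 2 * x2 ^+ 2 * x3 ^+ 3
      - 116 * x1 ^+ 2 * x2 ^+ 2 * x3 ^+ 2 - 85 * x1 ^+ 2 * x2 ^+ 2 * x3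
      - 18 * x1 ^+ 2 * x2 ^+ 2 + 24 * x1 ^+ 2 * x2 * x3 ^+ 4
      + 20 * x1 ^+ 2 * x2 * x3 ^+ 3 - 38 * x1 ^+ 2 * x2 * x3 ^+ 2
      - 41 * x1 ^+ 2 * x2 * x3 - 10 * x1 ^+ 2 * x2 + 48 * x1 ^+ 2 * x3 ^+ 4
      + 120 * x1 ^+ 2 * x3 ^+ 3 + 108 * x1 ^+ 2 * x3 ^+ 2 + 42 * x1 ^+ 2 * x3
      + 6 * x1 ^+ 2 - 16 * x1 * x2 ^+ 5 * x3 - 32 * x1 * x2 ^+ 5
      + 40 * x1 * x2 ^+ 4 * x3 ^+ 2 + 56 * x1 * x2 ^+ 4 * x3
      - 8 * x1 * x2 ^+ 4 - 32 * x1 * x2 ^+ 3 * x3 ^+ 3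
      + 40 * x1 * x2 ^+ 3 * x3 ^+ 2 + 132 * x1 * x2 ^+ 3 * x3
      + 48 * x1 * x2 ^+ 3 + 8 * x1 * x2 ^+ 2 * x3 ^+ 4
      - 112 * x1 * x2 ^+ 2 * x3 ^+ 3 - 190 * x1 * x2 ^+ 2 * x3 ^+ 2
      - 70 * x1 * x2 ^+ 2 * x3 - 2 * x1 * x2 ^+ 2 + 48 * x1 * x2 * x3 ^+ 4
      + 16 * x1 * x2 * x3 ^+ 3 - 100 * x1 * x2 * x3 ^+ 2 - 88 * x1 * x2 * x3
      - 20 * x1 * x2 + 48 * x1 * x3 ^+ 4 + 120 * x1 * x3 ^+ 3
      + 108 * x1 * x3 ^+ 2 + 42 * x1 * x3 + 6 * x1 + 16 * x2 ^+ 6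
      - 56 * x2 ^+ 5 * x3 - 8 * x2 ^+ 5 + 72 * x2 ^+ 4 * x3 ^+ 2
      - 12 * x2 ^+ 4 * x3 - 28 * x2 ^+ 4 - 40 * x2 ^+ 3 * x3 ^+ 3
      + 72 * x2 ^+ 3 * x3 ^+ 2 + 98 * x2 ^+ 3 * x3 + 18 * x2 ^+ 3
      + 8 * x2 ^+ 2 * x3 ^+ 4 - 76 * x2 ^+ 2 * x3 ^+ 3
      - 90 * x2 ^+ 2 * x3 ^+ 2 - 5 * x2 ^+ 2 * x3 + 10 * x2 ^+ 2
      + 24 * x2 * x3 ^+ 4 + 4 * x2 * x3 ^+ 3 - 54 * x2 * x3 ^+ 2
      - 45 * x2 * x3 - 10 * x2 + 16 * x3 ^+ 4 + 40 * x3 ^+ 3 + 36 * x3 ^+ 2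
      + 14 * x3 + 2
  | 10 =>
      4 * x1 ^+ 3 * x2 * x3 ^+ 2 + 2 * x1 ^+ 3 * x2 * x3
      + 8 * x1 ^+ 3 * x3 ^+ 3 + 8 * x1 ^+ 3 * x3 ^+ 2 + 2 * x1 ^+ 3 * x3
      - 8 * x1 ^+ 2 * x2 ^+ 2 * x3 ^+ 2 - 4 * x1 ^+ 2 * x2 ^+ 2 * x3
      + 2 * x1 ^+ 2 * x2 ^+ 2 + 8 * x1 ^+ 2 * x2 * x3 ^+ 3
      + 6 * x1 ^+ 2 * x2 * x3 ^+ 2 + 9 * x1 ^+ 2 * x2 * x3 + 4 * x1 ^+ 2 * x2
      + 20 * x1 ^+ 2 * x3 ^+ 3 + 28 * x1 ^+ 2 * x3 ^+ 2 + 13 * x1 ^+ 2 * x3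
      + 2 * x1 ^+ 2 - 8 * x1 * x2 ^+ 3 - 12 * x1 * x2 ^+ 2 * x3 ^+ 2
      - 16 * x1 * x2 ^+ 2 * x3 - 12 * x1 * x2 ^+ 2 + 12 * x1 * x2 * x3 ^+ 3
      + 14 * x1 * x2 * x3 ^+ 2 + 4 * x1 * x2 * x3 + 16 * x1 * x3 ^+ 3
      + 32 * x1 * x3 ^+ 2 + 20 * x1 * x3 + 4 * x1 + 8 * x2 ^+ 4
      - 12 * x2 ^+ 3 * x3 + 8 * x2 ^+ 3 - 24 * x2 ^+ 2 * x3 - 6 * x2 ^+ 2
      + 4 * x2 * x3 ^+ 3 + 12 * x2 * x3 ^+ 2 - 3 * x2 * x3 - 4 * x2
      + 4 * x3 ^+ 3 + 12 * x3 ^+ 2 + 9 * x3 + 2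
  | 11 =>
      2 * x1 ^+ 2 * x2 + 4 * x1 ^+ 2 * x3 + 2 * x1 ^+ 2 - 6 * x1 * x2 ^+ 2
      - 5 * x1 * x2 + 2 * x1 * x3 + x1 + 4 * x2 ^+ 3 - 4 * x2 ^+ 2 * x3
      + 4 * x2 ^+ 2 - 6 * x2 * x3 - x2 - 2 * x3 - 1
  | _ => 1
  end.

Definition factor2 {R : comNzRingType} (k : nat) (s x1 x2 x3 : R) : R :=
  match k with
  | 3 =>
      s * x1 - s * x3 - s + x1 + 2 * x2 + x3 - 1
  | 4 =>
      s * x1 * x2 - s * x1 - s * x2 - s * x3 + x1 * x2 + 2 * x1 * x3 + x1 + x2
      - x3 - 2
  | 5 =>
      s * x1 * x2 * x3 - s * x1 * x3 - s * x1 - s * x2 * x3 - 2 * s * x2 + s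
      + x1 * x2 * x3 + 2 * x1 * x2 + x1 * x3 - x1 + 2 * x2 ^+ 2 + x2 * x3
      - 2 * x2 - 2 * x3 - 1
  | 6 =>
      s * x1 * x2 * x3 - s * x1 * x2 - 2 * s * x1 * x3 + s * x2 ^+ 2 * x3
      - s * x2 ^+ 2 - 3 * s * x2 * x3 - s * x3 ^+ 2 + s * x3 + s
      + x1 * x2 * x3 + x1 * x2 + 2 * x1 * x3 ^+ 2 - 2 * x1 + x2 ^+ 2 * x3
      + x2 ^+ 2 + 2 * x2 * x3 ^+ 2 + x2 * x3 - 4 * x2 - x3 ^+ 2 - 3 * x3 + 1
  | 7 =>
      s * x1 * x2 ^+ 2 * x3 + s * x1 * x2 * x3 ^+ 2 - 3 * s * x1 * x2 * x3
      - 2 * s * x1 * x2 - 3 * s * x1 * x3 ^+ 2 - s * x1 * x3 + s * x1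
      - 2 * s * x2 ^+ 2 * x3 - 3 * s * x2 ^+ 2 - 3 * s * x2 * x3 ^+ 2
      - 2 * s * x2 * x3 + 3 * s * x2 - s * x3 ^+ 3 + s * x3 ^+ 2 + 3 * s * x3
      + x1 * x2 ^+ 2 * x3 + 2 * x1 * x2 ^+ 2 + 3 * x1 * x2 * x3 ^+ 2
      + 5 * x1 * x2 * x3 - 2 * x1 * x2 + 2 * x1 * x3 ^+ 3 + x1 * x3 ^+ 2
      - 5 * x1 * x3 - x1 + 2 * x2 ^+ 3 + 4 * x2 ^+ 2 * x3 - 3 * x2 ^+ 2
      + x2 * x3 ^+ 2 - 10 * x2 * x3 - 3 * x2 - x3 ^+ 3 - 5 * x3 ^+ 2 + x3 + 2
  | 8 =>
      4 * s * x1 ^+ 3 * x2 * x3 ^+ 2 - 8 * s * x1 ^+ 3 * x3 ^+ 2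
      - 4 * s * x1 ^+ 3 * x3 + 4 * s * x1 ^+ 2 * x2 ^+ 2 * x3 ^+ 2
      + 4 * s * x1 ^+ 2 * x2 ^+ 2 * x3 - 20 * s * x1 ^+ 2 * x2 * x3 ^+ 2
      - 32 * s * x1 ^+ 2 * x2 * x3 - 8 * s * x1 ^+ 2 * x2
      - 12 * s * x1 ^+ 2 * x3 ^+ 3 - 12 * s * x1 ^+ 2 * x3 ^+ 2
      + 8 * s * x1 ^+ 2 * x3 + 4 * s * x1 ^+ 2 + 4 * s * x1 * x2 ^+ 3 * x3
      - 8 * s * x1 * x2 ^+ 2 * x3 ^+ 2 - 44 * s * x1 * x2 ^+ 2 * x3
      - 24 * s * x1 * x2 ^+ 2 - 8 * s * x1 * x2 * x3 ^+ 3
      - 32 * s * x1 * x2 * x3 ^+ 2 + 12 * s * x1 * x2 * x3 + 24 * s * x1 * x2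
      + 4 * s * x1 * x3 ^+ 3 + 32 * s * x1 * x3 ^+ 2 + 24 * s * x1 * x3
      - 12 * s * x2 ^+ 3 * x3 - 16 * s * x2 ^+ 3 - 12 * s * x2 ^+ 2 * x3 ^+ 2
      + 24 * s * x2 ^+ 2 + 24 * s * x2 * x3 ^+ 2 + 36 * s * x2 * x3
      + 4 * s * x3 ^+ 3 - 12 * s * x3 - 4 * s + 4 * x1 ^+ 3 * x2 * x3 ^+ 2
      + 8 * x1 ^+ 3 * x2 * x3 + 8 * x1 ^+ 3 * x3 ^+ 3 + 8 * x1 ^+ 3 * x3 ^+ 2
      - 4 * x1 ^+ 3 * x3 + 4 * x1 ^+ 2 * x2 ^+ 2 * x3 ^+ 2
      + 20 * x1 ^+ 2 * x2 ^+ 2 * x3 + 8 * x1 ^+ 2 * x2 ^+ 2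
      + 8 * x1 ^+ 2 * x2 * x3 ^+ 3 + 36 * x1 ^+ 2 * x2 * x3 ^+ 2
      - 8 * x1 ^+ 2 * x2 - 4 * x1 ^+ 2 * x3 ^+ 3 - 44 * x1 ^+ 2 * x3 ^+ 2
      - 32 * x1 ^+ 2 * x3 - 4 * x1 ^+ 2 + 12 * x1 * x2 ^+ 3 * x3
      + 16 * x1 * x2 ^+ 3 + 24 * x1 * x2 ^+ 2 * x3 ^+ 2
      + 20 * x1 * x2 ^+ 2 * x3 - 24 * x1 * x2 ^+ 2 - 64 * x1 * x2 * x3 ^+ 2
      - 116 * x1 * x2 * x3 - 24 * x1 * x2 - 20 * x1 * x3 ^+ 3
      - 16 * x1 * x3 ^+ 2 + 32 * x1 * x3 + 16 * x1 + 8 * x2 ^+ 4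
      + 12 * x2 ^+ 3 * x3 - 16 * x2 ^+ 3 - 12 * x2 ^+ 2 * x3 ^+ 2
      - 72 * x2 ^+ 2 * x3 - 24 * x2 ^+ 2 - 8 * x2 * x3 ^+ 3
      - 24 * x2 * x3 ^+ 2 + 36 * x2 * x3 + 32 * x2 + 4 * x3 ^+ 3
      + 24 * x3 ^+ 2 + 12 * x3 - 4 * 1
  | 9 =>
      s * x1 ^+ 2 * x2 - s * x1 ^+ 2 + s * x1 * x2 ^+ 2 - s * x1 * x2 * x3
      - 4 * s * x1 * x2 - 2 * s * x1 * x3 - s * x2 ^+ 2 * x3 - 3 * s * x2 ^+ 2
      - s * x2 * x3 + s * x2 + s * x3 + s + x1 ^+ 2 * x2 + 2 * x1 ^+ 2 * x3
      + x1 ^+ 2 + 3 * x1 * x2 ^+ 2 + 3 * x1 * x2 * x3 + 2 * x1 * x2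
      - 2 * x1 * x3 - 4 * x1 + 2 * x2 ^+ 3 + x2 ^+ 2 * x3 - x2 ^+ 2
      - 3 * x2 * x3 - 5 * x2 - x3 + 1
  | _ => 1
  end.

Arguments factor1 : simpl never.
Arguments factor2 : simpl never.

Definition orbit1 {K : fieldType} (x1 x2 x3 : K) (n : nat) : K :=
  let p k := factor1 k x1 x2 x3 in
  match n with
  | 0 => x1 | 1 => x2 | 2 => x3
  | 3 => p 3 / (2 * x1)
  | 4 => p 4 / (2 * x1 * x2)
  | 5 => p 5 / (2 * x1 * x2 * x3)
  | 6 => p 6 / (x2 * x3 * p 3)
  | 7 => p 7 / (x3 * p 3 * p 4)
  | 8 => p 8 / (p 3 * p 4 * p 5)
  | 9 => p 9 / (2 * p 4 * p 5 * p 6)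
  | 10 => p 10 / (2 * p 5 * p 6)
  | 11 => p 11 / (2 * p 6)
  | 12 => x1 | 13 => x2 | _ => x3
  end.

Definition orbit2 {K : fieldType} (s x1 x2 x3 : K) (n : nat) : K :=
  let p k := factor2 k s x1 x2 x3 in
  match n with
  | 0 => x1 | 1 => x2 | 2 => x3
  | 3 => p 3 / (2 * x1)
  | 4 => p 4 / (2 * x1 * x2)
  | 5 => p 5 / (2 * x1 * x2 * x3)
  | 6 => p 6 / (x2 * x3 * p 3)
  | 7 => 2 * p 7 / (x3 * p 3 * p 4)
  | 8 => p 8 / (p 3 * p 4 * p 5)
  | 9 => 2 * p 7 * p 9 / (p 4 * p 5 * p 6)
  | 10 => p 8 / (2 * p 5 * p 6)
  | 11 => p 9 / p 6
  | 12 => x1 | 13 => x2 | _ => x3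
  end.

Section FirstRecursion.

Context {K : fieldType} {x1 x2 x3 : K}.
Hypotheses (two_neq0 : 2 != 0 :> K).
Hypotheses (x1_neq0 : x1 != 0) (x2_neq0 : x2 != 0) (x3_neq0 : x3 != 0).
Hypothesis factor1_neq0 : forall k, factor1 k x1 x2 x3 != 0.

Lemma orbit1_neq0 m : orbit1 x1 x2 x3 m != 0.
Proof.
case: m => [|[|[|[|[|[|[|[|[|[|[|[|[|[|[|m]]]]]]]]]]]]]]] //=;
  by do ?[apply: mulf_neq0 | apply: invr_neq0].
Qed.

(* [field] sees the factors unfolded, so each side condition it leaves is the
   body of some [factor1 k], discharged by conversion. *)
Lemma orbit1_rec m : (m < 12)%N -> let w := orbit1 x1 x2 x3 in
  w m.+3 * (2 * w m) = -1 - 2 * w m + 2 * w m.+1 - 2 * w m.+2.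
Proof.
case: m => [|[|[|[|[|[|[|[|[|[|[|[|m]]]]]]]]]]]] //= _; rewrite /factor1 /=;
  field;
  by do ?[apply/andP; split]; first [done
    | exact: factor1_neq0 3 | exact: factor1_neq0 4 | exact: factor1_neq0 5
    | exact: factor1_neq0 6 | exact: factor1_neq0 7 | exact: factor1_neq0 8
    | exact: factor1_neq0 9 | exact: factor1_neq0 10 | exact: factor1_neq0 11].
Qed.

Lemma periodic3_first : periodic3 (fun a b c => -1 - 2 * a + 2 * b - 2 * c)
  (fun a _ _ => 2 * a) x1 x2 x3 12.
Proof.
apply: (periodic3_cycle (orbit1 x1 x2 x3)) => // m lt_m12.
- exact: orbit1_rec.
- by rewrite mulf_neq0 // orbit1_neq0.
Qed.

End FirstRecursion.

Section SecondRecursion.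

Context {K : fieldType} (s : K) {x1 x2 x3 : K} {N : K -> K -> K -> K}.
Hypotheses (two_neq0 : 2 != 0 :> K) (s2 : s ^+ 2 = -3).
Hypotheses (x1_neq0 : x1 != 0) (x2_neq0 : x2 != 0) (x3_neq0 : x3 != 0).
Hypothesis factor2_neq0 : forall k, factor2 k s x1 x2 x3 != 0.
Hypothesis N_def :
  forall a b c, N a b c = (1 + s) * a + 2 * b + (1 - s) * c + (-1 - s).

Lemma orbit2_neq0 m : orbit2 s x1 x2 x3 m != 0.
Proof.
case: m => [|[|[|[|[|[|[|[|[|[|[|[|[|[|[|m]]]]]]]]]]]]]]] //=;
  by do ?[apply: mulf_neq0 | apply: invr_neq0].
Qed.

Lemma orbit2_rec m : (m < 12)%N -> let w := orbit2 s x1 x2 x3 in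
  w m.+3 * (2 * w m) = (1 + s) * w m + 2 * w m.+1 + (1 - s) * w m.+2 + (-1 - s).
Proof.
case: m => [|[|[|[|[|[|[|[|[|[|[|[|m]]]]]]]]]]]] //= _; rewrite /factor2 /=;
  field: s2;
  by do ?[apply/andP; split]; first [done
    | exact: factor2_neq0 3 | exact: factor2_neq0 4 | exact: factor2_neq0 5
    | exact: factor2_neq0 6 | exact: factor2_neq0 7 | exact: factor2_neq0 8
    | exact: factor2_neq0 9].
Qed.

Lemma periodic3_second : periodic3 N (fun a _ _ => 2 * a) x1 x2 x3 12.
Proof.
apply: (periodic3_cycle (orbit2 s x1 x2 x3)) => // m lt_m12.
- by rewrite N_def; exact: orbit2_rec.
- by rewrite mulf_neq0 // orbit2_neq0.
Qed.

End SecondRecursion.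

(* By Yoneda, a family commuting with all ring morphisms is an integer
   polynomial in its arguments, so it can be evaluated at the indeterminates of
   [ratfun3 C] and at the origin alike. *)
Definition natural4 (F : forall R : comNzRingType, R -> R -> R -> R -> R) :=
  forall (R S : comNzRingType) (f : {rmorphism R -> S}) (u a b c : R),
    f (F R u a b c) = F S (f u) (f a) (f b) (f c).

Definition ratfun3_const {C : fieldType} (t : C) : ratfun3 C :=
  FracField.tofrac (t%:P%:P%:P).

Definition eval_origin (C : comNzRingType) :
    {rmorphism {poly {poly {poly C}}} -> C} :=
  (horner_eval 0 \o horner_eval 0 \o horner_eval 0)%FUN.

Lemma eval_origin_indet {C : comNzRingType} (t : C) :
  [/\ eval_origin C (t%:P%:P%:P) = t, eval_origin C 'X = 0,
      eval_origin C 'X%:P = 0 & eval_origin C 'X%:P%:P = 0].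
Proof. by split; rewrite /= !horner_evalE !(hornerC, hornerX, horner0). Qed.

Lemma natural4_ratfun3_neq0 {C : fieldType}
    {F : forall R : comNzRingType, R -> R -> R -> R -> R} (t : C) :
  natural4 F -> F C t 0 0 0 != 0 ->
  F (ratfun3 C) (ratfun3_const t) (indet1 C) (indet2 C) (indet3 C) != 0.
Proof.
move=> natF F0; rewrite /ratfun3_const /indet1 /indet2 /indet3 -natF tofrac_eq0.
apply: contra_neq F0 => F_eq0.
have <- : F C (eval_origin C (t%:P%:P%:P)) (eval_origin C 'X)
    (eval_origin C 'X%:P) (eval_origin C 'X%:P%:P) = F C t 0 0 0.
  by case: (eval_origin_indet t) => -> -> -> ->.
by rewrite -natF F_eq0 rmorph0.
Qed.

Lemma factor1_natural k : natural4 (fun R _ => @factor1 R k).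
Proof.
move=> R S f _ a b c.
by case: k => [|[|[|[|[|[|[|[|[|[|[|[|k]]]]]]]]]]]]; rewrite /factor1 /=; ring.
Qed.

Lemma factor2_natural k : natural4 (fun R => @factor2 R k).
Proof.
move=> R S f s a b c.
by case: k => [|[|[|[|[|[|[|[|[|[|k]]]]]]]]]]; rewrite /factor2 /=; ring.
Qed.

Lemma factor1_origin_neq0 {C : fieldType} k :
  2 != 0 :> C -> factor1 k 0 0 0 != 0 :> C.
Proof.
move=> two_neq0.
case: k => [|[|[|[|[|[|[|[|[|[|[|[|k]]]]]]]]]]]]; rewrite ?oner_neq0 //;
  first [ by rewrite (_ : factor1 _ 0 0 0 = 1) ?oner_neq0 // /factor1; ring
        | by rewrite (_ : factor1 _ 0 0 0 = -1) ?oppr_eq0 ?oner_neq0 //;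
             rewrite /factor1; ring
        | by rewrite (_ : factor1 _ 0 0 0 = 2) // /factor1; ring ].
Qed.

Lemma factor2_origin_neq0 {C : fieldType} {s : C} k :
  2 != 0 :> C -> s ^+ 2 = -3 -> factor2 k s 0 0 0 != 0.
Proof.
move=> two_neq0 s2.
have four_eq : (1 + s) * (1 - s) = 2 * 2 by ring: s2.
have /andP[sP_neq0 sN_neq0] : (1 + s != 0) && (1 - s != 0).
  by rewrite -negb_or -mulf_eq0 four_eq mulf_neq0.
case: k => [|[|[|[|[|[|[|[|[|[|k]]]]]]]]]]; rewrite ?oner_neq0 //.
- by rewrite (_ : factor2 3 s 0 0 0 = - (1 + s)) ?oppr_eq0 // /factor2; ring.
- by rewrite (_ : factor2 4 s 0 0 0 = - 2) ?oppr_eq0 // /factor2; ring.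
- by rewrite (_ : factor2 5 s 0 0 0 = - (1 - s)) ?oppr_eq0 // /factor2; ring.
- by rewrite (_ : factor2 6 s 0 0 0 = 1 + s) // /factor2; ring.
- by rewrite (_ : factor2 7 s 0 0 0 = 2) // /factor2; ring.
- rewrite (_ : factor2 8 s 0 0 0 = - (2 * 2 * (1 + s))) ?oppr_eq0 ?mulf_neq0 //.
  by rewrite /factor2; ring.
- by rewrite (_ : factor2 9 s 0 0 0 = 1 + s) // /factor2; ring.
Qed.

Lemma indet_neq0 (C : fieldType) :
  [/\ indet1 C != 0, indet2 C != 0 & indet3 C != 0].
Proof.
by split; rewrite /indet1 /indet2 /indet3 tofrac_eq0 ?polyC_eq0 polyX_eq0.
Qed.

Lemma ratfun3_two_neq0 {C : fieldType} : 2 != 0 :> C -> 2 != 0 :> ratfun3 C.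
Proof.
move=> two_neq0.
apply: (natural4_ratfun3_neq0 (F := fun _ _ _ _ _ => 2) 0) => // R S f *.
exact: rmorph_nat.
Qed.

Lemma factor1_indet_neq0 {C : fieldType} : 2 != 0 :> C ->
  forall k, factor1 k (indet1 C) (indet2 C) (indet3 C) != 0.
Proof.
move=> two_neq0 k; apply: (natural4_ratfun3_neq0 0 (factor1_natural k)).
exact: factor1_origin_neq0.
Qed.

Lemma factor2_indet_neq0 {C : fieldType} {t : C} : 2 != 0 :> C -> t ^+ 2 = -3 ->
  forall k, factor2 k (ratfun3_const t) (indet1 C) (indet2 C) (indet3 C) != 0.
Proof.
move=> two_neq0 t2 k; apply: (natural4_ratfun3_neq0 _ (factor2_natural k)).
exact: factor2_origin_neq0.
Qed.

Lemma ratfun3_constD {C : fieldType} (x y : C) :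
  ratfun3_const (x + y) = ratfun3_const x + ratfun3_const y.
Proof. by rewrite /ratfun3_const !polyCD; exact: rmorphD. Qed.

Lemma ratfun3_constN {C : fieldType} (x : C) :
  ratfun3_const (- x) = - ratfun3_const x.
Proof. by rewrite /ratfun3_const !polyCN; exact: rmorphN. Qed.

Lemma ratfun3_const1 {C : fieldType} : ratfun3_const (1 : C) = 1.
Proof. by rewrite /ratfun3_const !polyC1; exact: rmorph1. Qed.

Lemma ratfun3_const_sqr {C : fieldType} {s : C} :
  s ^+ 2 = -3 -> ratfun3_const s ^+ 2 = -3.
Proof.
by move=> s2; rewrite /ratfun3_const -!rmorphXn s2 !rmorphN !rmorph_nat.
Qed.

Theorem mainTheorem3 (C : numClosedFieldType) :
  let K := ratfun3 C in
  let c (x : C) : K := FracField.tofrac (x%:P%:P%:P) in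
  let s : C := sqrtC 3 * 'i in
  [/\ rec3_periodic
        (fun a b c0 : K => -1 - 2 * a + 2 * b - 2 * c0) (fun a _ _ : K => 2 * a) 12,
      rec3_periodic
        (fun a b c0 : K => c (1 + s) * a + 2 * b + c (1 - s) * c0 + c (-1 - s))
        (fun a _ _ : K => 2 * a) 12 &
      rec3_periodic
        (fun a b c0 : K => c (1 - s) * a + 2 * b + c (1 + s) * c0 + c (-1 + s))
        (fun a _ _ : K => 2 * a) 12].
Proof.
move=> K c s.
have cE x : c x = ratfun3_const x by [].
have two_neq0 : 2 != 0 :> C by rewrite pnatr_eq0.
have two_neq0K := ratfun3_two_neq0 two_neq0.
have [x1_neq0 x2_neq0 x3_neq0] := indet_neq0 C.
have s2 : s ^+ 2 = -3 by rewrite exprMn sqrtCK sqrCi mulrN1.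
have sN2 : (- s) ^+ 2 = -3 by rewrite sqrrN.
split.
- exact: periodic3_first two_neq0K x1_neq0 x2_neq0 x3_neq0
    (factor1_indet_neq0 two_neq0).
- apply: (periodic3_second (c s) two_neq0K (ratfun3_const_sqr s2) x1_neq0
    x2_neq0 x3_neq0 (factor2_indet_neq0 two_neq0 s2)) => a b c0.
  by rewrite !cE !(ratfun3_constD, ratfun3_constN, ratfun3_const1).
- apply: (periodic3_second (c (- s)) two_neq0K (ratfun3_const_sqr sN2) x1_neq0
    x2_neq0 x3_neq0 (factor2_indet_neq0 two_neq0 sN2)) => a b c0.
  by rewrite !cE !(ratfun3_constD, ratfun3_constN, ratfun3_const1) opprK.
Qed.
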